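(* Let $P\in\mathbb N$ and let $\{E_i\mid i\in[P]\}$ be a collection of finite sets. There exists a pairwise disjoint collection $\{V_i\mid i\in[P]\}$ such that for all $i\in[P]$, $V_i\subseteq E_i$ and $\#V_i\ge\lfloor\#E_i/P\rfloor$.
   Context: $[P]=\{0,1,\dots,P-1\}$. *)

From mathcomp Require Import all_boot all_order.
From mathcomp Require Import finmap.

From mathcomp Require Import all_boot all_order.
From mathcomp Require Import finmap.
From mathcomp Require Import zify.
Local Open Scope fset_scope.

(* Choose the V_i greedily, in increasing order of #|E_i|, with exactly
   q_i = #|E_i| %/ P elements each.  When E_m is reached, the at most P - 1
   sets chosen before it have q_j <= q_m elements each, so they cover at most
   (P - 1) q_m elements of E_m, and since #|E_m| >= P q_m at least q_m
   elements of E_m are still free. *)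

Lemma exists_fsubset_card {T : choiceType} {S : {fset T}} {k : nat} :
  k <= #|` S| -> exists2 W : {fset T}, W `<=` S & #|` W| = k.
Proof.
move=> le_k_S; exists [fset x in take k S].
  by apply/fsubsetP => x; rewrite inE => /mem_take.
rewrite card_fseq undup_id ?take_uniq ?fset_uniq // size_take.
exact/minn_idPl.
Qed.

Lemma leq_card_bigfcup {T : choiceType} {I : eqType} (r : seq I) (Q : pred I)
    (F : I -> {fset T}) :
  #|` \bigcup_(i <- r | Q i) F i| <= \sum_(i <- r | Q i) #|` F i|.
Proof.
elim/big_rec2: _ => [|i n U _ le_U_n]; first by rewrite cardfs0.
by rewrite (leq_trans (leq_card_fsetU _ U).1) ?leq_add2l.
Qed.

Section GreedyDisjointChoice.

Context {T : choiceType} {I : finType} {E : I -> {fset T}} {k : I -> nat}.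
Hypothesis k_homo : forall i j, #|` E i| <= #|` E j| -> k i <= k j.
Hypothesis k_small : forall i, #|I| * k i <= #|` E i|.

Definition disjoint_choice_on (A : {set I}) (V : I -> {fset T}) :=
  (forall i j, i \in A -> j \in A -> i != j -> V i `&` V j = fset0) /\
  (forall i, i \in A -> V i `<=` E i /\ #|` V i| = k i).

Lemma disjoint_choice_extend {A : {set I}} {V : I -> {fset T}} {m : I} :
    disjoint_choice_on A V -> m \notin A ->
    (forall j, j \in A -> k j <= k m) ->
  exists W, disjoint_choice_on (m |: A) (fun i => if i == m then W else V i).
Proof.
move=> [V_disj V_sub] mA le_k_m.
pose U := \bigcup_(j in A) V j.
have card_U : #|` U| <= #|A| * k m.
  rewrite (leq_trans (leq_card_bigfcup _ _ V)) // -sum_nat_const.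
  by apply: leq_sum => j jA; rewrite (V_sub j jA).2 le_k_m.
have lt_A_I : #|A| < #|I|.
  by rewrite (leq_trans _ (max_card (m |: A))) // cardsU1 mA.
have free_m : k m <= #|` E m `\` U|.
  have := k_small m; have := fsubset_leq_card (fsubsetIr (E m) U).
  rewrite cardfsD; nia.
have [W sub_W card_W] := exists_fsubset_card free_m.
have [W_E W_U] := fsubsetDP _ _ _ sub_W.
have W_disj j : j \in A -> W `&` V j = fset0.
  move=> jA; apply/disjoint_fsetI0/(fdisjointWr _ W_U).
  by rewrite bigfcup_sup ?mem_index_enum.
exists W; split=> [i j|i]; rewrite !inE.
  case: (eqVneq i m) => [-> _|im /= iA]; case: (eqVneq j m) => [->|jm /= jA].
  - by [].
  - by move=> _; apply: W_disj.
  - by move=> _; rewrite fsetIC W_disj.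
  - exact: V_disj.
by case: (eqVneq i m) => [-> _|_ /= /V_sub //]; split.
Qed.

Lemma disjoint_choice_exists (A : {set I}) : exists V, disjoint_choice_on A V.
Proof.
elim: {A}#|A| {-2}A (erefl #|A|) => [|n IHn] A card_A.
  have -> : A = set0 by apply/eqP; rewrite -cards_eq0 card_A.
  by exists (fun=> fset0); split=> i; rewrite inE.
have [i0 i0A] : exists i0, i0 \in A by apply/set0Pn; rewrite -card_gt0 card_A.
have [m mA max_m] : exists2 m, m \in A & forall j, j \in A -> #|` E j| <= #|` E m|.
  by case: (arg_maxnP (fun i => #|` E i|) i0A) => m; exists m.
have card_Am : #|A :\ m| = n by move: card_A; rewrite (cardsD1 m A) mA => -[].
have [V V_Am] := IHn (A :\ m) card_Am.
have m_Am : m \notin A :\ m by rewrite !inE eqxx.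
have le_k_m j : j \in A :\ m -> k j <= k m.
  by rewrite inE => /andP[_ /max_m /k_homo].
have [W A_W] := disjoint_choice_extend V_Am m_Am le_k_m.
by exists (fun i => if i == m then W else V i); rewrite -(setD1K mA).
Qed.

End GreedyDisjointChoice.

Theorem proposition12 (T : choiceType) (P : nat) (E : 'I_P -> {fset T}) :
  exists V : 'I_P -> {fset T},
    (forall i j : 'I_P, i != j -> V i `&` V j = fset0) /\
    (forall i : 'I_P, V i `<=` E i /\ (#|` E i| %/ P <= #|` V i|)%N).
Proof.
have k_homo (i j : 'I_P) : (#|` E i| <= #|` E j|)%N ->
    (#|` E i| %/ P <= #|` E j| %/ P)%N.
  exact: leq_div2r.
have k_small (i : 'I_P) : (#|'I_P| * (#|` E i| %/ P) <= #|` E i|)%N.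
  by rewrite card_ord mulnC leq_trunc_div.
have [V [V_disj V_sub]] := disjoint_choice_exists k_homo k_small [set: 'I_P].
exists V; split=> [i j|i]; first exact: V_disj.
by have [-> ->] := V_sub i (in_setT i).
Qed.
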